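(* Let $(X,S)$ be an $S$-metric space and $r\ge0$. If a sequence $\{x_n\}$ in $X$ is statistically convergent to $x'\in X$, then $st\text{-}LIM^r x_n=B_S[x',r]$.
   Context: An $S$-metric on a nonempty set $X$ is a function $S:X^3\to[0,\infty)$ such that for all $x,y,z,a\in X$: $S(x,y,z)=0$ if and only if $x=y=z$, and $S(x,y,z)\le S(x,x,a)+S(y,y,a)+S(z,z,a)$. $B_S[x,r]=\{y\in X: S(y,y,x)\le r\}$. For $B\subset\mathbb N$ the natural density is $\delta(B)=\lim_{n\to\infty}\frac{|\{k\in B:k\le n\}|}{n}$ when the limit exists. $\{x_n\}$ is statistically convergent to $x'$ if for every $\varepsilon>0$, $\delta(\{n: S(x_n,x_n,x')\ge\varepsilon\})=0$. For $r\ge0$, $\{x_n\}$ is $r$-statistically convergent to $x$ if for every $\varepsilon>0$, $\delta(\{n\in\mathbb N: S(x_n,x_n,x)\ge r+\varepsilon\})=0$; $st\text{-}LIM^r x_n$ denotes the set of all such $x\in X$. *)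

From Stdlib Require Import Reals Classical ClassicalEpsilon.
Open Scope R_scope.

Record SMetric (X : Type) : Type := {
  Sfun :> X -> X -> X -> R;
  Sfun_nonneg : forall x y z, 0 <= Sfun x y z;
  Sfun_zero : forall x y z, Sfun x y z = 0 <-> (x = y /\ y = z);
  Sfun_tri : forall x y z a, Sfun x y z <= Sfun x x a + Sfun y y a + Sfun z z a
}.

Definition closed_ball {X : Type} (S : SMetric X) (x : X) (r : R) : X -> Prop :=
  fun y => S y y x <= r.

Definition ind (B : nat -> Prop) (k : nat) : R :=
  if excluded_middle_informative (B k) then 1 else 0.

(* |{k in B : 1 <= k <= n}| as a real number (N = {1,2,...}). *)
Fixpoint count_upto (B : nat -> Prop) (n : nat) : R :=
  match n with
  | O => 0
  | S m => count_upto B m + ind B (S m)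
  end.

Definition has_density (B : nat -> Prop) (d : R) : Prop :=
  Un_cv (fun n => count_upto B (S n) / INR (S n)) d.

(* Statistical convergence of x (indexed by N = {1,2,...}; x 0 is irrelevant). *)
Definition stat_conv {X : Type} (S : SMetric X) (x : nat -> X) (x' : X) : Prop :=
  forall eps, 0 < eps -> has_density (fun n => S (x n) (x n) x' >= eps) 0.

Definition r_stat_conv {X : Type} (S : SMetric X) (r : R) (x : nat -> X) (y : X) : Prop :=
  forall eps, 0 < eps -> has_density (fun n => S (x n) (x n) y >= r + eps) 0.

Definition st_LIM {X : Type} (S : SMetric X) (r : R) (x : nat -> X) : X -> Prop :=
  fun y => r_stat_conv S r x y.

From Pilot Require Import Defs.
From Stdlib Require Import Reals Lra Lia ClassicalEpsilon.
Open Scope R_scope.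

(* If x_n -> x' statistically, then by the S-metric triangle inequality
   S(x_n,x_n,y) <= 2 S(x_n,x_n,x') + S(y,y,x'), so every y of the ball
   B_S[x',r] is an r-statistical limit.  Conversely, if S(y,y,x') = r + 2d
   with d > 0, every index n has S(x_n,x_n,y) >= r + d or
   S(x_n,x_n,x') >= d/2; both index sets having density zero would give
   the whole of N density zero. *)

Lemma Sfun_refl (X : Type) (S : SMetric X) (x : X) : S x x x = 0.
Proof. now apply Sfun_zero. Qed.

Lemma Sfun_sym (X : Type) (S : SMetric X) (x y : X) : S x x y = S y y x.
Proof.
  assert (Hle : forall a b, S a a b <= S b b a).
  { intros a b. pose proof (Sfun_tri X S a a b a). rewrite Sfun_refl in *. lra. }
  pose proof (Hle x y); pose proof (Hle y x); lra.
Qed.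

Lemma Sfun_tri2 (X : Type) (S : SMetric X) (x y z : X) :
  S x x y <= 2 * S x x z + S y y z.
Proof. pose proof (Sfun_tri X S x x y z); lra. Qed.

Lemma Un_cv_0_squeeze (u v : nat -> R) :
  (forall n, 0 <= u n <= v n) -> Un_cv v 0 -> Un_cv u 0.
Proof.
  intros Huv Hv eps Heps.
  destruct (Hv eps Heps) as [N HN]; exists N; intros n Hn.
  specialize (HN n Hn); specialize (Huv n).
  unfold R_dist in *; rewrite Rminus_0_r in *.
  rewrite Rabs_pos_eq in * by lra; lra.
Qed.

(* Qualified because [Reals] also exports [Rtopology.ind]. *)
Lemma ind_bounds (A : nat -> Prop) (k : nat) : 0 <= Defs.ind A k <= 1.
Proof. unfold Defs.ind; destruct excluded_middle_informative; lra. Qed.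

Lemma ind_mono (A B : nat -> Prop) (k : nat) :
  (A k -> B k) -> Defs.ind A k <= Defs.ind B k.
Proof.
  unfold Defs.ind; intros HAB.
  destruct (excluded_middle_informative (A k)), (excluded_middle_informative (B k));
    intuition lra.
Qed.

Lemma ind_union_le (A B : nat -> Prop) (k : nat) :
  Defs.ind (fun n => A n \/ B n) k <= Defs.ind A k + Defs.ind B k.
Proof.
  unfold Defs.ind.
  destruct (excluded_middle_informative (A k \/ B k)) as [[]|],
    (excluded_middle_informative (A k)), (excluded_middle_informative (B k));
    intuition lra.
Qed.

Lemma count_upto_nonneg (A : nat -> Prop) (n : nat) : 0 <= count_upto A n.
Proof. induction n; simpl; [lra|]. pose proof (ind_bounds A (S n)); lra. Qed.

Lemma count_upto_mono (A B : nat -> Prop) (n : nat) :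
  (forall k, A k -> B k) -> count_upto A n <= count_upto B n.
Proof.
  intros HAB; induction n; simpl; [lra|].
  pose proof (ind_mono A B (S n) (HAB (S n))); lra.
Qed.

Lemma count_upto_union_le (A B : nat -> Prop) (n : nat) :
  count_upto (fun k => A k \/ B k) n <= count_upto A n + count_upto B n.
Proof.
  induction n; simpl; [lra|].
  pose proof (ind_union_le A B (S n)); lra.
Qed.

Lemma count_upto_full (n : nat) : count_upto (fun _ => True) n = INR n.
Proof.
  induction n as [|n IH]; [reflexivity|].
  rewrite S_INR; simpl count_upto; rewrite IH.
  unfold Defs.ind; destruct excluded_middle_informative; tauto || lra.
Qed.

Lemma inv_INR_S_pos (n : nat) : 0 < / INR (S n).
Proof. apply Rinv_0_lt_compat, lt_0_INR; lia. Qed.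

Lemma density_ratio_nonneg (A : nat -> Prop) (n : nat) :
  0 <= count_upto A (S n) / INR (S n).
Proof.
  pose proof (count_upto_nonneg A (S n)); pose proof (inv_INR_S_pos n).
  unfold Rdiv; apply Rmult_le_pos; lra.
Qed.

Lemma has_density0_subset (A B : nat -> Prop) :
  (forall k, A k -> B k) -> has_density B 0 -> has_density A 0.
Proof.
  intros HAB; apply Un_cv_0_squeeze; intro n.
  split; [apply density_ratio_nonneg|].
  apply Rmult_le_compat_r; [left; apply inv_INR_S_pos | now apply count_upto_mono].
Qed.

Lemma has_density0_union (A B : nat -> Prop) :
  has_density A 0 -> has_density B 0 -> has_density (fun k => A k \/ B k) 0.
Proof.
  intros HA HB.
  apply Un_cv_0_squeeze with
    (v := fun n => count_upto A (S n) / INR (S n) + count_upto B (S n) / INR (S n)).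
  - intro n; split; [apply density_ratio_nonneg|].
    unfold Rdiv; rewrite <- Rmult_plus_distr_r.
    apply Rmult_le_compat_r; [left; apply inv_INR_S_pos | apply count_upto_union_le].
  - rewrite <- (Rplus_0_r 0); now apply CV_plus.
Qed.

Lemma not_has_density0_full : ~ has_density (fun _ => True) 0.
Proof.
  intros Hfull; destruct (Hfull 1 Rlt_0_1) as [N HN].
  specialize (HN N (Nat.le_refl N)); unfold R_dist in HN.
  rewrite count_upto_full, Rdiv_diag, Rminus_0_r, Rabs_R1 in HN
    by (apply not_0_INR; lia).
  lra.
Qed.

Lemma has_density0_cover (A B : nat -> Prop) :
  (forall k, A k \/ B k) -> has_density A 0 -> has_density B 0 -> False.
Proof.
  intros Hcover HA HB; apply not_has_density0_full.
  apply has_density0_subset with (B := fun k => A k \/ B k); [auto|].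
  now apply has_density0_union.
Qed.

Section StatLimit.

Variables (X : Type) (S : SMetric X) (r : R) (x : nat -> X) (x' : X).
Hypothesis Hstat : stat_conv S x x'.

Lemma closed_ball_sub_st_LIM (y : X) : closed_ball S x' r y -> st_LIM S r x y.
Proof.
  intros Hy eps Heps.
  apply has_density0_subset with (B := fun n => S (x n) (x n) x' >= eps / 2).
  - intros k Hk; pose proof (Sfun_tri2 X S (x k) y x'); unfold closed_ball in Hy; lra.
  - apply Hstat; lra.
Qed.

Lemma st_LIM_sub_closed_ball (y : X) : st_LIM S r x y -> closed_ball S x' r y.
Proof.
  intros Hy; unfold closed_ball.
  destruct (Rle_or_lt (S y y x') r) as [|Hgt]; [assumption|exfalso].
  set (d := (S y y x' - r) / 2).
  assert (Hd : 0 < d) by (unfold d; lra).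
  apply (has_density0_cover (fun n => S (x n) (x n) y >= r + d)
                            (fun n => S (x n) (x n) x' >= d / 2)).
  - intro k.
    destruct (Rge_or_lt (S (x k) (x k) x') (d / 2)) as [|Hlt]; [now right|left].
    pose proof (Sfun_tri2 X S x' y (x k)).
    rewrite (Sfun_sym X S x' y), (Sfun_sym X S x' (x k)), (Sfun_sym X S y (x k)) in *.
    unfold d in *; lra.
  - exact (Hy d Hd).
  - apply Hstat; lra.
Qed.

End StatLimit.

Theorem theorem4p3 (X : Type) (S : SMetric X) (r : R) (hr : 0 <= r)
  (x : nat -> X) (x' : X) :
  stat_conv S x x' ->
  forall y : X, st_LIM S r x y <-> closed_ball S x' r y.
Proof.
  intros Hstat y; split.
  - now apply st_LIM_sub_closed_ball.
  - now apply closed_ball_sub_st_LIM.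
Qed.
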